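(* The pointwise limit $\bar V=\lim_{n\to\infty}V^n$ equals the optimal value function $V^{[0,\bar c]}$ on $[0,\infty)\times[0,\bar c]$.
   Context: Let $(W_t)_{t\ge0}$ be a standard Brownian motion and $X_t=x+\mu t+\sigma W_t$ with constants $\mu\in\mathbb R$, $\sigma>0$ and initial value $x\ge 0$; $(\mathcal F_t)_{t\ge0}$ is the completed filtration generated by $X$. Fix $q>0$, $\Lambda>0$, $\bar c>0$. For a set $S\subset[0,\bar c]$, $x\ge0$ and $c\in S$, $\Pi^S_{x,c}$ denotes the set of processes $C=(C_t)_{t\ge0}$ that are non-increasing, right-continuous, $(\mathcal F_t)$-adapted, take values in $S$, and satisfy $C_t\le c$ for all $t\ge 0$ (an immediate reduction at time $0$ is allowed). For such $C$, $X^C_t=X_t-\int_0^t C_s\,ds$, $\tau=\inf\{t\ge0: X^C_t<0\}$, $J(x;C)=\mathbb E\big[\int_0^{\tau}e^{-qs}(C_s+\Lambda)\,ds\big]$ and $V^S(x,c)=\sup_{C\in\Pi^S_{x,c}}J(x;C)$. Let $(\mathcal S^n)_{n\ge0}$ be finite sets with $\{0,\bar c\}=\mathcal S^0\subset\mathcal S^1\subset\cdots\subset[0,\bar c]$, each containing $0$ and $\bar c$, whose mesh size $\delta(\mathcal S^n)$ (maximal gap between consecutive elements) tends to $0$. For $(x,c)\in[0,\infty)\times[0,\bar c]$ let $\tilde c^n=\max\{c'\in\mathcal S^n: c'\le c\}$ and $V^n(x,c)=V^{\mathcal S^n}(x,\tilde c^n)$. Then $V^n(x,c)$ is non-decreasing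 in $n$ and bounded by $V^{[0,\bar c]}(x,c)$, and $\bar V(x,c):=\lim_{n\to\infty}V^n(x,c)$. *)

From HB Require Import structures.
From mathcomp Require Import all_boot all_order all_algebra.
From mathcomp Require Import all_classical all_reals all_analysis.
Set Implicit Arguments. Unset Strict Implicit. Unset Printing Implicit Defensive.
Import Order.TTheory GRing.Theory Num.Theory.
Import numFieldNormedType.Exports.
Local Open Scope classical_set_scope.
Local Open Scope ring_scope.

Definition indep_rvs {d} {Om : measurableType d} {R : realType}
  (P : probability Om R) (n : nat) (Y : 'I_n -> Om -> R) : Prop :=
  forall B : 'I_n -> set R, (forall i, measurable (B i)) ->
    P (\bigcap_(i in [set: 'I_n]) (Y i @^-1` B i)) =
    (\prod_(i < n) P (Y i @^-1` B i))%E.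

(* Standard Brownian motion on [0, oo) (values at negative times irrelevant). *)
Definition is_std_BM {d} {Om : measurableType d} {R : realType}
  (P : probability Om R) (W : R -> Om -> R) : Prop :=
  [/\ forall w, W 0 w = 0,
      forall w, {within `[0, +oo[, continuous (fun t => W t w)},
      forall t, measurable_fun setT (W t),
      forall s t, 0 <= s -> s < t -> forall B : set R, measurable B ->
        P ((fun w => W t w - W s w) @^-1` B) = normal_prob 0 (Num.sqrt (t - s)) B
    & forall (n : nat) (ts : 'I_n.+1 -> R), 0 <= ts ord0 ->
        (forall i j : 'I_n.+1, (i < j)%N -> ts i < ts j) ->
        indep_rvs P (fun (i : 'I_n) w =>
          W (ts (lift ord0 i)) w - W (ts (widen_ord (leqnSn n) i)) w)].

Definition Xproc {Om : Type} {R : realType} (W : R -> Om -> R) (x mu sigma : R)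
  : R -> Om -> R := fun t w => x + mu * t + sigma * W t w.

Definition nat_filtration {d} {Om : measurableType d} {R : realType}
  (P : probability Om R) (X : R -> Om -> R) (t : R) : set (set Om) :=
  <<s [set A | exists s, 0 <= s <= t /\
                 exists B : set R, measurable B /\ A = X s @^-1` B]
      `|` [set N | P.-negligible N] >>.

Definition admissible {d} {Om : measurableType d} {R : realType}
  (P : probability Om R) (X : R -> Om -> R) (S : set R) (c : R)
  (C : R -> Om -> R) : Prop :=
  [/\ forall w s t, 0 <= s -> s <= t -> C t w <= C s w,
      forall w t, 0 <= t -> (fun u => C u w) @ t^'+ --> C t w,
      forall t, 0 <= t -> forall B : set R, measurable B ->
        nat_filtration P X t (C t @^-1` B),
      forall w t, 0 <= t -> S (C t w)
    & forall w t, 0 <= t -> C t w <= c].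

Definition XC {Om : Type} {R : realType} (X C : R -> Om -> R) (t : R) (w : Om) : R :=
  X t w - Rintegral lebesgue_measure `[0, t] (fun s => C s w).

(* ruin time tau = inf {t >= 0 : X^C_t < 0} (+oo if empty) *)
Definition ruin_time {Om : Type} {R : realType} (X C : R -> Om -> R) (w : Om)
  : \bar R :=
  ereal_inf (EFin @` [set t | 0 <= t /\ XC X C t w < 0]).

Definition Jval {d} {Om : measurableType d} {R : realType}
  (P : probability Om R) (X : R -> Om -> R) (q Lam : R) (C : R -> Om -> R)
  : \bar R :=
  (\int[P]_w
     \int[lebesgue_measure]_(s in [set s : R | (0 <= s)%R /\ (s%:E < ruin_time X C w)%E])
        ((expR (- (q * s)) * (C s w + Lam))%R)%:E)%E.

Definition Vval {d} {Om : measurableType d} {R : realType}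
  (P : probability Om R) (W : R -> Om -> R) (mu sigma q Lam : R)
  (S : set R) (x c : R) : \bar R :=
  ereal_sup [set Jval P (Xproc W x mu sigma) q Lam C
            | C in admissible P (Xproc W x mu sigma) S c].

Definition consecutive {R : realType} (S : set R) (a b : R) : Prop :=
  [/\ S a, S b, a < b & ~ (exists y, S y /\ a < y /\ y < b)].

Definition mesh {R : realType} (S : set R) : R :=
  sup [set g | exists a b, consecutive S a b /\ g = b - a].

Definition round_down {R : realType} (S : set R) (c : R) : R :=
  sup [set c' | S c' /\ c' <= c].

Definition Vn {d} {Om : measurableType d} {R : realType}
  (P : probability Om R) (W : R -> Om -> R) (mu sigma q Lam : R)
  (Sn : nat -> set R) (n : nat) (x c : R) : \bar R :=
  Vval P W mu sigma q Lam (Sn n) x (round_down (Sn n) c).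

(* Round an admissible control down onto the grid, to the largest grid point
   strictly below its current value.  The rounded control is again admissible
   for the grid problem, started from the rounded level.  It pays less, so it
   is ruined later, and per unit of time it loses at most the mesh [delta];
   after discounting at rate [q] the loss is at most [delta / q].  Hence
   [V^n <= V <= V^n + delta(S^n) / q], the first inequality because grid
   controls are admissible for [[0, cbar]].  The estimate does not depend on
   the law of the driving process. *)

From HB Require Import structures.
From mathcomp Require Import all_boot all_order all_algebra.
From mathcomp Require Import all_classical all_reals all_analysis.
From mathcomp Require Import measurable_realfun.
Import Order.TTheory GRing.Theory Num.Theory.
Import numFieldNormedType.Exports.
Local Open Scope classical_set_scope.
Local Open Scope ring_scope.
Set Implicit Arguments. Unset Strict Implicit. Unset Printing Implicit Defensive.

Section GridFloor.
Variables (R : realType) (s : seq R).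
Implicit Types y z : R.

(* Strictness of [z < y] makes [grid_floor] left-continuous, so rounding a
   nonincreasing right-continuous control keeps it right-continuous. *)
Definition grid_floor y : R := \big[Num.max/0]_(z <- s | z < y) z.

Lemma grid_floor_spec y :
  grid_floor y = 0 \/ (grid_floor y \in s /\ grid_floor y < y).
Proof.
rewrite /grid_floor; elim: s => [|a s' IH]; first by rewrite big_nil; left.
rewrite big_cons; case: ifPn => ay; last first.
  by case: IH => [->|[h1 h2]]; [left|right; rewrite in_cons h1 orbT].
rewrite maxEle; case: ifPn => _; last by right; rewrite in_cons eqxx.
by case: IH => [->|[h1 h2]]; [left|right; rewrite in_cons h1 orbT].
Qed.

Lemma grid_floor_ub y z : z \in s -> z < y -> z <= grid_floor y.
Proof.
rewrite /grid_floor; elim: s => [//|a s' IH]; rewrite in_cons big_cons.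
case/orP => [/eqP -> ay|zs zy]; first by rewrite ay le_max lexx.
by case: ifPn => _; rewrite ?le_max IH ?orbT.
Qed.

Lemma grid_floor_ge0 y : 0 <= grid_floor y.
Proof.
rewrite /grid_floor; elim: s => [|a s' IH]; first by rewrite big_nil.
by rewrite big_cons; case: ifPn => _ //; rewrite le_max IH orbT.
Qed.

Lemma grid_floor_lt y : 0 < y -> grid_floor y < y.
Proof. by move=> y0; case: (grid_floor_spec y) => [->|[]]. Qed.

Lemma grid_floor_le y : 0 <= y -> grid_floor y <= y.
Proof. by move=> y0; case: (grid_floor_spec y) => [->|[_ /ltW]]. Qed.

Lemma grid_floor_homo : {homo grid_floor : a b / a <= b}.
Proof.
move=> a b ab; case: (grid_floor_spec a) => [->|[ha ha']].
  exact: grid_floor_ge0.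
by apply: grid_floor_ub => //; exact: lt_le_trans ab.
Qed.

Lemma measurable_grid_floor : measurable_fun setT grid_floor.
Proof. exact: nondecreasing_measurable grid_floor_homo. Qed.

Definition grid_ceil (c y : R) : R := \big[Num.min/c]_(z <- s | y <= z) z.

Lemma grid_ceil_spec c y :
  grid_ceil c y = c \/ (grid_ceil c y \in s /\ y <= grid_ceil c y).
Proof.
rewrite /grid_ceil; elim: s => [|a s' IH]; first by rewrite big_nil; left.
rewrite big_cons; case: ifPn => ay; last first.
  by case: IH => [->|[h1 h2]]; [left|right; rewrite in_cons h1 orbT].
rewrite minEle; case: ifPn => _; first by right; rewrite in_cons eqxx.
by case: IH => [->|[h1 h2]]; [left|right; rewrite in_cons h1 orbT].
Qed.

Lemma grid_ceil_lb c y z : z \in s -> y <= z -> grid_ceil c y <= z.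
Proof.
rewrite /grid_ceil; elim: s => [//|a s' IH]; rewrite in_cons big_cons.
case/orP => [/eqP -> ay|zs zy]; first by rewrite ay ge_min lexx.
by case: ifPn => _; rewrite ?ge_min IH ?orbT.
Qed.

Hypothesis s0 : 0 \in s.

Lemma grid_floor_in y : grid_floor y \in s.
Proof. by case: (grid_floor_spec y) => [->|[]]. Qed.

Lemma grid_floor_cvg_right (f : R -> R) t :
  0 <= f t -> (forall u, t < u -> f u <= f t) -> f @ t^'+ --> f t ->
  (grid_floor \o f) @ t^'+ --> grid_floor (f t).
Proof.
move=> ft0 f_le f_cvg; apply: cvg_near_cst.
have floor_ge : \forall u \near t^'+, grid_floor (f t) <= grid_floor (f u).
  have [ft_gt0|ft_le0] := ltP 0 (f t); last first.
    apply: nearW => u; apply: le_trans (grid_floor_ge0 _).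
    exact: le_trans (grid_floor_le ft0) ft_le0.
  near=> u; apply: grid_floor_ub; first exact: grid_floor_in.
  by near: u; exact: cvgr_gt f_cvg _ (grid_floor_lt ft_gt0).
near=> u; apply/eqP; rewrite eq_le [X in X && _]grid_floor_homo /=.
  by near: u; exact: floor_ge.
by apply: f_le; near: u; exact: nbhs_right_gt.
Unshelve. all: by end_near.
Qed.

Variable cbar : R.
Hypotheses (c0 : 0 < cbar) (sc : cbar \in s)
  (sb : forall z, z \in s -> 0 <= z <= cbar).

Lemma grid_floor_gap_pos y : 0 < y <= cbar ->
  y - grid_floor y <= mesh [set` s].
Proof.
move=> /andP[y0 yc]; set a := grid_floor y; set b := grid_ceil cbar y.
have bs : b \in s by rewrite /b; case: (grid_ceil_spec cbar y) => [->|[]].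
have yb : y <= b by rewrite /b; case: (grid_ceil_spec cbar y) => [->|[]].
have ay : a < y by exact: grid_floor_lt.
have ab : consecutive [set` s] a b.
  split; [exact: grid_floor_in | by [] | exact: lt_le_trans yb|].
  move=> [z [zs [az zb]]]; have [zy|yz] := ltP z y.
    by move/(lt_le_trans az): (grid_floor_ub zs zy); rewrite ltxx.
  by move/(le_lt_trans (grid_ceil_lb cbar zs yz)): zb; rewrite ltxx.
apply: (@le_trans _ _ (b - a)); first by rewrite lerD2r.
apply: sup_upper_bound; last by exists a, b.
split; first by exists (b - a), a, b.
exists cbar => _ [a' [b' [[Sa' Sb' _ _] ->]]].
have /andP[a'0 _] := sb Sa'; have /andP[_ b'c] := sb Sb'.
by rewrite lerBlDr (le_trans b'c)// lerDl.
Qed.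

Lemma mesh_ge0 : 0 <= mesh [set` s].
Proof.
apply: le_trans (@grid_floor_gap_pos cbar _); last by rewrite c0 lexx.
by rewrite subr_ge0 grid_floor_le// ltW.
Qed.

Lemma grid_floor_gap y : 0 <= y <= cbar -> y - grid_floor y <= mesh [set` s].
Proof.
move=> /andP[y0 yc]; have [y_gt0|] := ltP 0 y.
  by apply: grid_floor_gap_pos; rewrite y_gt0.
move=> y_le0; have -> : y = 0 by apply/eqP; rewrite eq_le y_le0.
by rewrite (le_trans _ mesh_ge0)// subr_le0 grid_floor_ge0.
Qed.

End GridFloor.

Lemma admissible_weaken d (T : measurableType d) (R : realType)
    (P : probability T R) (X : R -> T -> R) (S S' : set R) (c c' : R)
    (C : R -> T -> R) :
  S `<=` S' -> c' <= c -> admissible P X S c' C -> admissible P X S' c C.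
Proof.
move=> SS' c'c [C_nonincr C_rc C_adapted C_S C_le]; split => //.
- by move=> w t t0; apply: SS'; exact: C_S.
- by move=> w t t0; exact: le_trans (C_le w t t0) c'c.
Qed.

Lemma admissible_grid_floor d (T : measurableType d) (R : realType)
    (P : probability T R) (X : R -> T -> R) (s : seq R) (cbar c : R)
    (C : R -> T -> R) : 0 \in s ->
  admissible P X `[0, cbar] c C ->
  admissible P X [set` s] (round_down [set` s] c)
    (fun t w => grid_floor s (C t w)).
Proof.
move=> s0 [C_nonincr C_rc C_adapted C_S C_le].
have C_ge0 w t : 0 <= t -> 0 <= C t w.
  by move=> t0; have := C_S w t t0; rewrite /= in_itv => /andP[].
split.
- by move=> w u t u0 ut; apply: grid_floor_homo; exact: C_nonincr.
- move=> w t t0; apply: (grid_floor_cvg_right s0 (C_ge0 w t t0)); last exact: C_rc.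
  by move=> u tu; apply: C_nonincr => //; exact: ltW.
- move=> t t0 B mB; apply: (C_adapted t t0 (grid_floor s @^-1` B)).
  by rewrite -[X in measurable X]setTI; exact: measurable_grid_floor.
- by move=> w t t0; exact: grid_floor_in.
- move=> w t t0; have Ct0 := C_ge0 w t t0.
  apply: sup_upper_bound.
    split; first by exists 0; split => //; exact: le_trans Ct0 (C_le w t t0).
    by exists c => z [].
  split; first exact: grid_floor_in.
  exact: le_trans (grid_floor_le s Ct0) (C_le w t t0).
Qed.

Section DiscountedPayoff.
Variable R : realType.
Local Notation leb := (@lebesgue_measure R).

Definition before_ruin {T : Type} (X C : R -> T -> R) (w : T) : set R :=
  [set u | 0 <= u /\ (u%:E < ruin_time X C w)%E].

Lemma measurable_before (tau : \bar R) :
  measurable [set u : R | 0 <= u /\ (u%:E < tau)%E].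
Proof.
case: tau => [r| |].
- have -> : [set u : R | 0 <= u /\ (u%:E < r%:E)%E] = `[0, r[%classic.
    apply/seteqP; split => u /=; rewrite in_itv /= lte_fin; first by case=> -> ->.
    by case/andP => -> ->.
  exact: measurable_itv.
- have -> : [set u : R | 0 <= u /\ (u%:E < +oo)%E] = `[0, +oo[%classic.
    apply/seteqP; split => u /=; rewrite in_itv /= ?andbT; first by case.
    by move=> ->; rewrite ltry.
  exact: measurable_itv.
- have -> : [set u : R | 0 <= u /\ (u%:E < -oo)%E] = set0.
    by apply/seteqP; split => u //= [_]; rewrite ltNge leNye.
  exact: measurable0.
Qed.

Lemma le_ruin_time {T : Type} (X C C' : R -> T -> R) (w : T) :
  (forall t, 0 <= t -> Rintegral leb `[0, t] (fun u => C' u w) <=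
                       Rintegral leb `[0, t] (fun u => C u w)) ->
  (ruin_time X C w <= ruin_time X C' w)%E.
Proof.
move=> C'C; apply: ereal_inf_le_tmp => _ [t [t0 Xt] <-].
exists t => //; split => //; apply: le_lt_trans Xt.
by rewrite /XC lerD2l lerN2; exact: C'C.
Qed.

Section Nonincreasing.
Variable f : R -> R.
Hypothesis f_nonincr : forall u t, 0 <= u -> u <= t -> f t <= f u.

Lemma nonincreasing_measurable_nonneg (D : set R) :
  measurable D -> D `<=` [set u | 0 <= u] -> measurable_fun D f.
Proof.
move=> mD D0; have : measurable_fun D (fun u => f (Num.max u 0)).
  apply: nonincreasing_measurable => // a b ab.
  apply: f_nonincr; first by rewrite le_max lexx orbT.
  by rewrite ge_max !le_max ab lexx !orbT.
by apply: eq_measurable_fun => u /[!inE] /D0 /= u0; rewrite max_l.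
Qed.

Lemma nonincreasing_bounded_integrable (cbar t : R) :
  (forall u, 0 <= u -> 0 <= f u <= cbar) -> 0 <= t ->
  leb.-integrable `[0, t] (EFin \o f).
Proof.
move=> f_bound t0; apply: measurable_bounded_integrable => //.
- have := lebesgue_measure_itv `[0, t]; rewrite /= => ->.
  by case: ifP => _; rewrite ?ltry // -EFinD ltry.
- by apply: nonincreasing_measurable_nonneg => // u /=; rewrite in_itv /= => /andP[].
- exists cbar; split; rewrite ?num_real // => M cM u /=.
  rewrite in_itv /= => /andP[u0 _]; have /andP[fu0 fuc] := f_bound u u0.
  by rewrite ger0_norm // (le_trans fuc) // ltW.
Qed.

Variables (q Lam : R).

Lemma measurable_discounted (D : set R) :
  measurable D -> D `<=` [set u | 0 <= u] ->
  measurable_fun D (fun u => ((expR (- (q * u)) * (f u + Lam))%:E : \bar R)).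
Proof.
move=> mD D0; apply/measurable_EFinP; apply: measurable_funM.
  by apply: measurableT_comp => //; apply: measurableT_comp => //; exact: measurable_funM.
by apply: measurable_funD => //; exact: nonincreasing_measurable_nonneg.
Qed.

End Nonincreasing.

Lemma integral_discount_le (q m : R) (D : set R) : 0 < q -> 0 <= m ->
  measurable D -> D `<=` [set u | 0 <= u] ->
  (\int[leb]_(u in D) ((expR (- (q * u)) * m)%R)%:E <= (m / q)%:E)%E.
Proof.
move=> q0 m0 mD D0; have pdf_ge0 u : (0 <= (exponential_pdf q u)%:E)%E.
  by rewrite lee_fin exponential_pdf_ge0 ?ltW.
have -> : (\int[leb]_(u in D) ((expR (- (q * u)) * m)%R)%:E =
           \int[leb]_(u in D) ((m / q)%:E * (exponential_pdf q u)%:E))%E.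
  apply: eq_integral => u /[!inE] /D0 /= u0; rewrite exponential_pdfE // -EFinM.
  by rewrite mulNr mulrA divfK ?gt_eqF // mulrC.
rewrite ge0_integralZl_EFin //; last 2 first.
- by apply/measurable_EFinP; exact: measurable_funS (measurable_exponential_pdf q).
- by rewrite divr_ge0 // ltW.
rewrite -[leRHS]mule1; apply: lee_pmul => //.
- by rewrite lee_fin divr_ge0 // ltW.
- exact: integral_ge0.
rewrite -(integral_exponential_pdf q0); apply: ge0_subset_integral => //.
by apply/measurable_EFinP; exact: measurable_exponential_pdf.
Qed.

End DiscountedPayoff.

(* No measurability is assumed, so the comparison goes through the
   approximating simple functions: [h <= F] gives [(h - k)^+ <= G]. *)
Section IntegralLeAddCst.
Context d (T : measurableType d) (R : realType) (P : probability T R).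
Import HBNNSimple.

Section PosPartSubCst.
Variables (h : {nnsfun T >-> R}) (k : R).

Definition pos_sub_cst (x : T) : R := Num.max (h x - k) 0.

Lemma pos_sub_cst_ge0 x : 0 <= pos_sub_cst x.
Proof. by rewrite /pos_sub_cst le_max lexx orbT. Qed.
HB.instance Definition _ := isNonNegFun.Build T R pos_sub_cst pos_sub_cst_ge0.

Lemma measurable_pos_sub_cst : measurable_fun setT pos_sub_cst.
Proof. by apply: measurable_maxr => //; apply: measurable_funB. Qed.
HB.instance Definition _ :=
  isMeasurableFun.Build d _ T R pos_sub_cst measurable_pos_sub_cst.

Lemma finite_range_pos_sub_cst : finite_set (range pos_sub_cst).
Proof.
apply: (@sub_finite_set _ _ ((fun y => Num.max (y - k) 0) @` range h)).
  by move=> _ [x _ <-]; exists (h x) => //; exists x.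
by apply: finite_image; exact: fimfunP.
Qed.
HB.instance Definition _ := FiniteImage.Build T R pos_sub_cst finite_range_pos_sub_cst.

Definition pos_sub_cst_nnsfun : {nnsfun T >-> R} := pos_sub_cst.

End PosPartSubCst.

Lemma ge0_integral_le_add_cst (F G : T -> \bar R) (k : R) : 0 <= k ->
  (forall x, 0 <= F x)%E -> (forall x, 0 <= G x)%E ->
  (forall x, F x <= G x + k%:E)%E ->
  (\int[P]_x F x <= \int[P]_x G x + k%:E)%E.
Proof.
move=> k0 F0 G0 FG; rewrite ge0_integralTE//.
apply: ge_ereal_sup => _ [h /= hF <-].
have hkG : (sintegral P (pos_sub_cst_nnsfun h k) <= \int[P]_x G x)%E.
  rewrite ge0_integralTE//; apply: ereal_sup_ubound.
  exists (pos_sub_cst_nnsfun h k) => // x /=; rewrite /pos_sub_cst.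
  have [//|hk_gt0] := leP (h x - k) 0.
  by rewrite EFinB leeBlDr//; exact: le_trans (hF x) (FG x).
pose k_cst := @cst_nnsfun _ T R (NngNum k0).
have h_le : (sintegral P h <= sintegral P (add_nnsfun (pos_sub_cst_nnsfun h k) k_cst))%E.
  by apply: le_sintegral => x /=; rewrite /pos_sub_cst -lerBlDr le_max lexx.
apply: le_trans h_le _; rewrite sintegralD; apply: leeD => //.
have := @sintegral_EFin_cst _ T R P setT (NngNum k0).
by rewrite patch_setT /= probability_setT mule1 => <-.
Qed.

End IntegralLeAddCst.

Section GridFloorPayoff.
Variables (R : realType) (T : Type) (X : R -> T -> R) (s : seq R) (cbar q Lam : R).
Hypotheses (c0 : 0 < cbar) (s0 : 0 \in s) (sc : cbar \in s)
  (sb : forall z, z \in s -> 0 <= z <= cbar) (q0 : 0 < q) (Lam0 : 0 < Lam).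
Variables (C : R -> T -> R) (w : T).
Hypotheses (C_nonincr : forall u t, 0 <= u -> u <= t -> C t w <= C u w)
  (C_bound : forall u, 0 <= u -> 0 <= C u w <= cbar).
Local Notation Cn := (fun t w => grid_floor s (C t w)).
Local Notation leb := (@lebesgue_measure R).

Let Cn_nonincr u t : 0 <= u -> u <= t -> Cn t w <= Cn u w.
Proof. by move=> u0 ut; apply: grid_floor_homo; exact: C_nonincr. Qed.

Let Cn_bound u : 0 <= u -> 0 <= Cn u w <= cbar.
Proof.
move=> u0; have /andP[Cu0 Cuc] := C_bound u0.
by rewrite grid_floor_ge0 (le_trans (grid_floor_le s Cu0)).
Qed.

Lemma before_ruin_grid_floor : before_ruin X C w `<=` before_ruin X Cn w.
Proof.
have paid_less t : 0 <= t ->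
    Rintegral leb `[0, t] (fun u => Cn u w) <= Rintegral leb `[0, t] (fun u => C u w).
  move=> t0; apply: le_Rintegral => //.
  - exact: (@nonincreasing_bounded_integrable _ (Cn^~ w) Cn_nonincr _ _ Cn_bound t0).
  - exact: (@nonincreasing_bounded_integrable _ (C^~ w) C_nonincr _ _ C_bound t0).
  move=> u /=; rewrite in_itv /= => /andP[u0 _].
  by have /andP[Cu0 _] := C_bound u0; exact: grid_floor_le.
move=> u [u0 ut]; split => //; apply: lt_le_trans ut _.
exact: le_ruin_time paid_less.
Qed.

Lemma discounted_payoff_grid_floor_le :
  (\int[leb]_(u in before_ruin X C w) ((expR (- (q * u)) * (C u w + Lam))%R)%:E <=
   \int[leb]_(u in before_ruin X Cn w)
      ((expR (- (q * u)) * (Cn u w + Lam))%R)%:E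
   + (mesh [set` s] / q)%:E)%E.
Proof.
set m := mesh [set` s]; set D := before_ruin X C w.
have mD : measurable D := measurable_before _.
have D0 : D `<=` [set u | 0 <= u] by move=> u [].
have mDn := measurable_before (ruin_time X Cn w).
have Dn0 : before_ruin X Cn w `<=` [set u | 0 <= u] by move=> u [].
have m0 : 0 <= m by exact: mesh_ge0 sc sb.
have e0 u : 0 <= expR (- (q * u)) by exact/ltW/expR_gt0.
have fCn_ge0 (A : set R) u : A `<=` [set u | 0 <= u] -> A u ->
    (0 <= ((expR (- (q * u)) * (Cn u w + Lam))%R)%:E)%E.
  by move=> A0 /A0 u0; rewrite lee_fin mulr_ge0 // addr_ge0 ?grid_floor_ge0 // ltW.
have g_ge0 u : D u -> (0 <= ((expR (- (q * u)) * m)%R)%:E)%E.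
  by move=> _; rewrite lee_fin mulr_ge0.
have mg : measurable_fun D (fun u => ((expR (- (q * u)) * m)%R)%:E).
  apply/measurable_EFinP; apply: measurable_funM => //.
  by apply: measurableT_comp => //; apply: measurableT_comp => //; exact: measurable_funM.
have mfCn := @measurable_discounted _ (Cn^~ w) Cn_nonincr q Lam _ mD D0.
apply: (@le_trans _ _ (\int[leb]_(u in D)
   (((expR (- (q * u)) * (Cn u w + Lam))%R)%:E + ((expR (- (q * u)) * m)%R)%:E))%E).
  apply: ge0_le_integral => //.
  - move=> u /D0 u0; have /andP[Cu0 _] := C_bound u0.
    by rewrite lee_fin mulr_ge0 // addr_ge0 // ltW.
  - exact: @measurable_discounted _ (C^~ w) C_nonincr q Lam _ mD D0.
  - exact: emeasurable_funD.
  - move=> u /D0 u0; rewrite -EFinD lee_fin -mulrDr ler_wpM2l //.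
    rewrite addrAC lerD2r -lerBlDl.
    exact: (grid_floor_gap s0 c0 sc sb (C_bound u0)).
rewrite ge0_integralD //; last by move=> u; exact: fCn_ge0.
apply: leeD; last exact: integral_discount_le.
apply: ge0_subset_integral => //; last exact: before_ruin_grid_floor.
- exact: @measurable_discounted _ (Cn^~ w) Cn_nonincr q Lam _ mDn Dn0.
- by move=> u; exact: fCn_ge0.
Qed.

End GridFloorPayoff.

Section GridValue.
Context d (T : measurableType d) (R : realType) (P : probability T R).
Variables (s : seq R) (cbar q Lam : R).
Hypotheses (c0 : 0 < cbar) (s0 : 0 \in s) (sc : cbar \in s)
  (sb : forall z, z \in s -> 0 <= z <= cbar) (q0 : 0 < q) (Lam0 : 0 < Lam).

Lemma Jval_grid_floor_le (X : R -> T -> R) c C : admissible P X `[0, cbar] c C ->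
  (Jval P X q Lam C <= Jval P X q Lam (fun t w => grid_floor s (C t w))
     + (mesh [set` s] / q)%:E)%E.
Proof.
move=> [C_nonincr _ _ C_S _].
have C_bound w u : 0 <= u -> 0 <= C u w <= cbar.
  by move=> u0; have := C_S w u u0; rewrite /= in_itv.
apply: ge0_integral_le_add_cst.
- by rewrite divr_ge0 ?(mesh_ge0 s0 c0 sc sb) // ltW.
- move=> w; apply: integral_ge0 => u [u0 _]; have /andP[Cu0 _] := C_bound w u u0.
  by rewrite lee_fin mulr_ge0 ?addr_ge0 // ltW // expR_gt0.
- move=> w; apply: integral_ge0 => u [u0 _].
  by rewrite lee_fin mulr_ge0 ?addr_ge0 ?grid_floor_ge0 // ltW // expR_gt0.
- move=> w; apply: (discounted_payoff_grid_floor_le X c0 s0 sc sb q0 Lam0).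
    by move=> u t; exact: C_nonincr.
  by move=> u; exact: C_bound.
Qed.

Lemma Vval_le_round_down_add_mesh (W : R -> T -> R) (mu sigma x c : R) :
  (Vval P W mu sigma q Lam `[0%R, cbar] x c <=
   Vval P W mu sigma q Lam [set` s] x (round_down [set` s] c)
   + (mesh [set` s] / q)%:E)%E.
Proof.
apply: ge_ereal_sup => _ [C C_adm <-].
apply: le_trans (Jval_grid_floor_le C_adm) _; rewrite leeD2r //.
by apply: ereal_sup_ubound; exists (fun t w => grid_floor s (C t w));
  first exact: admissible_grid_floor C_adm.
Qed.

End GridValue.

Lemma le_Vval d (T : measurableType d) (R : realType) (P : probability T R)
    (W : R -> T -> R) (mu sigma q Lam : R) (S S' : set R) (x c c' : R) :
  S `<=` S' -> c' <= c ->
  (Vval P W mu sigma q Lam S x c' <= Vval P W mu sigma q Lam S' x c)%E.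
Proof.
move=> SS' c'c; apply: ereal_sup_le => _ [C C_adm <-].
by exists C => //; exact: admissible_weaken C_adm.
Qed.

Lemma round_down_le (R : realType) (S : set R) (c : R) :
  S 0 -> 0 <= c -> round_down S c <= c.
Proof. by move=> S0 c0; apply: ge_sup => [|z []//]; exists 0. Qed.

Lemma cvge_sandwich_add (R : realType) (u : nat -> \bar R) (e : nat -> R)
    (v : \bar R) :
  e n @[n --> \oo] --> 0 -> (forall n, u n <= v <= u n + (e n)%:E)%E ->
  u n @[n --> \oo] --> v.
Proof.
move=> e0 uv; case: v uv => [v| |] uv.
- apply: (@squeeze_cvge _ _ _ _ (fun n => (v - e n)%:E) _ (fun=> v%:E)).
  + apply: nearW => n; have /andP[uv1 uv2] := uv n.
    by rewrite uv1 andbT EFinB leeBlDr.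
  + apply: cvg_EFin; first exact: nearW.
    by rewrite -[X in _ --> X]subr0; apply: cvgB => //; exact: cvg_cst.
  + exact: cvg_cst.
- suff -> : u = fun=> +oo%E by exact: cvg_cst.
  apply/funext => n; have /andP[_] := uv n.
  by case: (u n) => // r; rewrite leye_eq.
- suff -> : u = fun=> -oo%E by exact: cvg_cst.
  by apply/funext => n; have /andP[] := uv n; rewrite leeNy_eq => /eqP.
Qed.

Unset Implicit Arguments. Set Strict Implicit.
Theorem theorem5p2 (R : realType) (d : measure_display) (Om : measurableType d)
  (P : probability Om R) (W : R -> Om -> R) (mu sigma q Lam cbar : R)
  (Sn : nat -> set R) :
  is_std_BM P W -> 0 < sigma -> 0 < q -> 0 < Lam -> 0 < cbar ->
  (forall n, finite_set (Sn n)) ->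
  Sn 0%N = [set c | c = 0 \/ c = cbar] ->
  (forall n, Sn n `<=` Sn n.+1) ->
  (forall n, Sn n `<=` `[0, cbar]) ->
  (forall n, Sn n 0 /\ Sn n cbar) ->
  mesh (Sn n) @[n --> \oo] --> (0 : R) ->
  forall x c : R, 0 <= x -> 0 <= c <= cbar ->
    Vn P W mu sigma q Lam Sn n x c @[n --> \oo] -->
      Vval P W mu sigma q Lam `[0, cbar] x c.
Proof.
move=> _ _ q0 Lam0 cbar0 Sn_fin _ _ Sn_sub Sn_ends mesh0 x c _ /andP[c0 _].
apply: (cvge_sandwich_add (e := fun n => mesh (Sn n) / q)).
  by rewrite -(mul0r q^-1); exact: cvgMr_tmp mesh0.
move=> n; have [s Sn_s] := cid (iffLR (finite_seqP (Sn n)) (Sn_fin n)).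
have [s0 sc] := Sn_ends n; rewrite Sn_s in s0 sc.
have sb z : z \in s -> 0 <= z <= cbar.
  by move=> zs; have := Sn_sub n z; rewrite Sn_s /= in_itv; apply.
rewrite /Vn Sn_s; apply/andP; split.
  by apply: le_Vval; [move=> z /sb; rewrite /= in_itv | exact: round_down_le].
exact: Vval_le_round_down_add_mesh cbar0 s0 sc sb q0 Lam0 W mu sigma x c.
Qed.
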